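(* Let $s\in\mathbb{N}$, let $B$ be a Banach space of real functions on $[0,1]^s$ with norm $\|\cdot\|_B$, and let $S$ be a collection of finite multisets of points in $[0,1]^s$ equipped with a probability distribution, $P$ denoting a random element of $S$. Suppose $\epsilon>0$ and $\delta\in(0,1)$ satisfy \[\Pr\left[e^{\mathrm{wor}}(Q_P;B)\le\epsilon\right]\ge1-\delta.\] Let $r$ be an odd positive integer and let $P_1,\ldots,P_r$ be drawn independently from $S$ according to the same distribution. Then \[\Pr\left[e^{\mathrm{wor}}(M_r;B)\le\epsilon\right]\ge1-\binom{r}{(r+1)/2}\delta^{(r+1)/2}.\]
   Context: For a finite multiset $P\subset[0,1]^s$ with $N=|P|$, $Q_P(f)=\frac1N\sum_{\boldsymbol x\in P}f(\boldsymbol x)$ and $I_s(f)=\int_{[0,1]^s}f(\boldsymbol x)\,\mathrm d\boldsymbol x$. The median rule is $M_r(f)=\mathrm{median}(Q_{P_1}(f),\ldots,Q_{P_r}(f))$. For a (deterministic, given realization) rule $A$, the worst-case error is $e^{\mathrm{wor}}(A;B)=\sup_{f\in B,\|f\|_B\le1}|A(f)-I_s(f)|$. *)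

From HB Require Import structures.
From mathcomp Require Import all_boot all_order all_algebra.
From mathcomp Require Import all_classical all_reals all_analysis.
Set Implicit Arguments. Unset Strict Implicit. Unset Printing Implicit Defensive.
Import Order.TTheory GRing.Theory Num.Theory.
Import numFieldNormedType.Exports.
Local Open Scope classical_set_scope.
Local Open Scope ring_scope.

Section QMC.
Variable R : realType.

Definition unit_cube (s : nat) : set 'rV[R]_s :=
  [set x | forall i, 0 <= x ord0 i <= 1].

(* I_s(f) = \int_{[0,1]^s} f, written as the iterated Lebesgue integral
   \int_0^1 ... \int_0^1 f(x_1,...,x_s) dx_s ... dx_1. *)
Fixpoint cube_integral (s : nat) : ('rV[R]_s -> R) -> R :=
  match s return ('rV[R]_s -> R) -> R with
  | 0 => fun f => f 0
  | s'.+1 => fun f =>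
      Rintegral lebesgue_measure `[0, 1]
        (fun x : R => cube_integral (fun y : 'rV[R]_s' =>
            f (row_mx (const_mx x : 'rV[R]_1) y)))
  end.

(* Q_P(f) = (1/N) sum_{x in P} f(x), for a finite multiset P given as a seq. *)
Definition qmc_rule (s : nat) (P : seq 'rV[R]_s) (f : 'rV[R]_s -> R) : R :=
  (size P)%:R^-1 * \sum_(x <- P) f x.

Definition median (xs : seq R) : R :=
  nth 0 (sort <=%R xs) (size xs)./2.

Definition median_rule (s r : nat) (Ps : 'I_r -> seq 'rV[R]_s)
    (f : 'rV[R]_s -> R) : R :=
  median [seq qmc_rule (Ps i) f | i <- enum 'I_r].

(* Worst-case error of a rule A on the unit ball of the function space V,
   whose elements are realized as real functions through ev. *)
Definition wce (s : nat) (V : normedModType R) (ev : V -> 'rV[R]_s -> R)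
    (A : ('rV[R]_s -> R) -> R) : \bar R :=
  ereal_sup [set (`| A (ev f) - cube_integral (ev f) |)%:E | f in [set f : V | `|f| <= 1]].

Definition mutually_independent (d d' : measure_display)
    (Omega : measurableType d) (S : measurableType d')
    (Pr : probability Omega R) (r : nat) (X : 'I_r -> Omega -> S) : Prop :=
  forall A : 'I_r -> set S, (forall i, measurable (A i)) ->
    Pr (\bigcap_(i in [set: 'I_r]) (X i @^-1` A i)) =
    (\prod_(i < r) Pr (X i @^-1` A i))%E.

End QMC.

(* If at most k of r = 2k+1 reals lie farther than eps from c, the middle
   entry of their sorted list is squeezed into [c - eps, c + eps].  So M_r can
   have worst-case error above eps only if at least k+1 of the P_i are bad.
   By independence, k+1 prescribed P_i are all bad with probability
   mu(bad)^(k+1) <= delta^(k+1), and a union bound over the C(r, k+1) choices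
   of these indices gives the claim. *)

From HB Require Import structures.
From mathcomp Require Import all_boot all_order all_algebra.
From mathcomp Require Import all_classical all_reals all_analysis.
From mathcomp Require Import zify lra.
Import Order.TTheory GRing.Theory Num.Theory.
Import numFieldNormedType.Exports.
Set Implicit Arguments. Unset Strict Implicit.
Local Open Scope classical_set_scope.
Local Open Scope ring_scope.

Lemma count_enum_card (T : finType) (p : pred T) : count p (enum T) = #|[set x | p x]%SET|.
Proof. by rewrite enumT -sum1_count sum1_card cardsE. Qed.

Lemma exists_subset_card (T : finType) (A : {set T}) k :
  (k <= #|A|)%N -> exists2 B : {set T}, B \subset A & #|B| = k.
Proof.
move=> k_le; exists [set x in take k (enum A)].
  by apply/fintype.subsetP => x; rewrite inE => /mem_take; rewrite mem_enum.
rewrite cardsE (card_uniqP _) ?take_uniq ?enum_uniq // size_take -cardE.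
by case: ltngtP k_le => // ->.
Qed.

Lemma median_dist_le (R : realType) (xs : seq R) (c e : R) :
  odd (size xs) -> (count (fun x => (e < `|x - c|)%R) xs <= (size xs)./2)%N ->
  `|median xs - c| <= e.
Proof.
move=> odd_xs bad_le; rewrite /median; set k := (size xs)./2.
have size_xs : size xs = k.*2.+1.
  by rewrite -[LHS](odd_double_half (size xs)) odd_xs.
have sorted_xs := sort_sorted (@le_total _ R) xs.
rewrite ler_distl; apply/andP; split.
  apply: nth_count_ge => //; rewrite count_sort size_sort size_xs -addnn.
  apply/andP; split; last by lia.
  apply: leq_trans bad_le; apply: sub_count => x /= x_lt.
  by rewrite ltr_normr; apply/orP; right; lra.
apply: nth_count_le => //; rewrite count_sort.
rewrite -(leq_add2r (count (predC (<= (c + e))%R) xs)) count_predC size_xs.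
rewrite -addnn addSn ltnS leq_add2l; apply: leq_trans bad_le.
apply: sub_count => x /=; rewrite -ltNge => x_gt.
by rewrite ltr_normr; apply/orP; left; lra.
Qed.

Lemma wce_leP (R : realType) s (V : normedModType R) (ev : V -> 'rV[R]_s -> R)
    (A : ('rV[R]_s -> R) -> R) (eps : R) :
  (wce ev A <= eps%:E)%E <->
  (forall f : V, `|f| <= 1 -> `|A (ev f) - cube_integral (ev f)| <= eps).
Proof.
split=> [wce_le f f_le1 | err_le].
  by rewrite -lee_fin; apply: le_trans wce_le; apply: ereal_sup_ubound; exists f.
by apply: ge_ereal_sup => _ [f f_le1 <-]; rewrite lee_fin; apply: err_le.
Qed.

Lemma median_rule_wce_le (R : realType) s (V : normedModType R)
    (ev : V -> 'rV[R]_s -> R) r (Ps : 'I_r -> seq 'rV[R]_s) (eps : R) :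
  odd r -> (#|[set i | ~~ (wce ev (qmc_rule (Ps i)) <= eps%:E)%E]%SET| <= r./2)%N ->
  (wce ev (median_rule Ps) <= eps%:E)%E.
Proof.
move=> odd_r bad_le; apply/wce_leP => f f_le1.
apply: median_dist_le; rewrite size_map size_enum_ord // count_map.
apply: leq_trans bad_le; rewrite -count_enum_card; apply: sub_count => i /=.
by apply: contraTN => /wce_leP wce_le; rewrite -leNgt; apply: wce_le.
Qed.

Lemma Boole_inequality_seq d (T : ringOfSetsType d) (R : realFieldType)
    (mu : {content set T -> \bar R}) (I : Type) (s : seq I) (P : pred I)
    (F : I -> set T) :
  (forall i, P i -> measurable (F i)) ->
  (mu (\big[setU/set0]_(i <- s | P i) F i) <= \sum_(i <- s | P i) mu (F i))%E.
Proof.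
move=> mF; pose K (U : set T) (e : \bar R) := measurable U /\ (mu U <= e)%E.
suff [] : K (\big[setU/set0]_(i <- s | P i) F i) (\sum_(i <- s | P i) mu (F i)) by [].
apply: big_rec2 => [|i U e Pi [mU le_Ue]]; first by split; rewrite ?measure0.
split; first by apply: measurableU => //; apply: mF.
by apply: le_trans (measureU2 _ _ _) _ => //; [apply: mF | apply: leeD].
Qed.

Lemma probability_setC_leP d (T : measurableType d) (R : realType)
    (P : probability T R) (A : set T) (c : R) :
  measurable A -> ((1 - c)%:E <= P A)%E <-> (P (~` A) <= c%:E)%E.
Proof.
move=> mA; rewrite probability_setC // -(fineK (fin_num_measure P _ mA)) -EFinB.
by rewrite !lee_fin; split=> ?; lra.
Qed.

Section independent_hits.
Context d d' (Omega : measurableType d) (S : measurableType d') (R : realType).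
Variables (Pr : probability Omega R) (mu : probability S R).
Variables (r : nat) (X : 'I_r -> Omega -> S).
Hypothesis X_meas : forall i, measurable_fun setT (X i).
Hypothesis X_law : forall i (A : set S), measurable A -> Pr (X i @^-1` A) = mu A.
Hypothesis X_indep : mutually_independent Pr X.
Variables (A : set S) (mA : measurable A).

Definition all_hit (T : {set 'I_r}) : set Omega :=
  [set w | forall i, i \in T -> A (X i w)].

Definition hits (w : Omega) : {set 'I_r} := [set i | X i w \in A]%SET.

Lemma all_hitE T :
  all_hit T = \bigcap_(i in [set: 'I_r]) X i @^-1` (if i \in T then A else setT).
Proof.
apply/seteqP; split=> w /= hit i.
  by move=> _; case: ifPn => // /hit.
by move=> iT; have := hit i I; rewrite iT.
Qed.

Lemma measurable_all_hit T : measurable (all_hit T).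
Proof.
rewrite all_hitE; apply: fin_bigcap_measurable => [|i _]; first exact: finite_finset.
case: ifP => _; first by rewrite -[X i @^-1` A]setTI; apply: X_meas.
by rewrite preimage_setT.
Qed.

Lemma prob_all_hit T : Pr (all_hit T) = (fine (mu A) ^+ #|T|)%:E.
Proof.
rewrite all_hitE X_indep; last by move=> i; case: ifP.
rewrite (eq_bigr (fun i => (if i \in T then fine (mu A) else 1)%:E)); last first.
  move=> i _; rewrite X_law; last by case: ifP.
  by case: ifP => _; rewrite ?probability_setT ?fineK ?fin_num_measure.
by rewrite prodEFin -big_mkcond prodr_const.
Qed.

Lemma many_hitsE k :
  [set w | (k < #|hits w|)%N] = \big[setU/set0]_(T : {set 'I_r} | #|T| == k.+1) all_hit T.
Proof.
rewrite -bigcup_seq_cond; apply/seteqP; split=> w /=.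
  move=> /exists_subset_card[T T_hits cardT]; exists T.
    by rewrite /= cardT eqxx andbT; apply: mem_index_enum.
  by move=> i /(fintype.subsetP T_hits); rewrite inE => /set_mem.
move=> [T /andP[_ /eqP cardT] hit]; rewrite -cardT; apply: subset_leq_card.
by apply/fintype.subsetP => i iT; rewrite inE; apply/mem_set/hit.
Qed.

Lemma measurable_many_hits k : measurable [set w | (k < #|hits w|)%N].
Proof. by rewrite many_hitsE; apply: bigsetU_measurable => T _; apply: measurable_all_hit. Qed.

Lemma prob_many_hits_le k :
  (Pr [set w | (k < #|hits w|)%N] <= ('C(r, k.+1)%:R * fine (mu A) ^+ k.+1)%:E)%E.
Proof.
rewrite many_hitsE; apply: le_trans.
  by apply: Boole_inequality_seq => T _; apply: measurable_all_hit.
rewrite (eq_bigr (fun _ => (fine (mu A) ^+ k.+1)%:E)); last first.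
  by move=> T /eqP <-; apply: prob_all_hit.
by rewrite sumEFin lee_fin sumr_const mulr_natl -cardsE card_draws card_ord.
Qed.

End independent_hits.

Theorem proposition3p2 (R : realType) (s : nat)
  (* the Banach space B: a complete normed space whose elements are realized
     as real functions on [0,1]^s via the linear, injective map ev *)
  (B : completeNormedModType R) (ev : B -> 'rV[R]_s -> R)
  (ev_lin : forall (a : R) (u v : B) (x : 'rV[R]_s),
      ev (a *: u + v) x = a * ev u x + ev v x)
  (ev_inj : forall u v : B,
      (forall x, unit_cube x -> ev u x = ev v x) -> u = v)
  (* the collection S of finite multisets of points of [0,1]^s, with a
     probability distribution mu *)
  (d1 : measure_display) (S : measurableType d1)
  (pts : S -> seq 'rV[R]_s)
  (pts_cube : forall (p : S) (x : 'rV[R]_s), x \in pts p -> unit_cube x)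
  (mu : probability S R)
  (eps delta : R) (eps_gt0 : 0 < eps) (delta01 : 0 < delta < 1)
  (good_meas : measurable [set p : S | (wce ev (qmc_rule (pts p)) <= eps%:E)%E])
  (hyp : ((1 - delta)%:E <= mu [set p : S | (wce ev (qmc_rule (pts p)) <= eps%:E)%E])%E)
  (* r odd, and P_1, ..., P_r drawn independently from S according to mu *)
  (r : nat) (r_odd : odd r)
  (d2 : measure_display) (Omega : measurableType d2) (Pr : probability Omega R)
  (X : 'I_r -> Omega -> S)
  (X_meas : forall i, measurable_fun setT (X i))
  (X_law : forall i (A : set S), measurable A -> Pr (X i @^-1` A) = mu A)
  (X_indep : mutually_independent Pr X)
  (median_event_meas : measurable
      [set w : Omega | (wce ev (median_rule (fun i => pts (X i w))) <= eps%:E)%E]) :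
  ((1 - ('C(r, r.+1./2))%:R * delta ^+ (r.+1./2))%:E <=
    Pr [set w : Omega | (wce ev (median_rule (fun i => pts (X i w))) <= eps%:E)%E])%E.
Proof.
set k := r./2; have -> : r.+1./2 = k.+1 by rewrite /= uphalf_half r_odd.
set good := [set p : S | (wce ev (qmc_rule (pts p)) <= eps%:E)%E].
set G := [set w : Omega | (wce ev (median_rule (fun i => pts (X i w))) <= eps%:E)%E].
have bad_meas : measurable (~` good) by apply: measurableC.
have mu_bad_le : (mu (~` good) <= delta%:E)%E by apply/probability_setC_leP.
have bad_sub : ~` G `<=` [set w | (k < #|hits X (~` good) w|)%N].
  move=> w G_w; rewrite /= ltnNge; apply/negP => few_bad; apply: G_w.
  apply: median_rule_wce_le r_odd _; apply: leq_trans few_bad.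
  apply/subset_leq_card/fintype.subsetP => i; rewrite !inE => bad_i.
  by apply/negP.
apply/probability_setC_leP => //.
apply: le_trans (le_measure _ _ _ bad_sub) _; rewrite ?inE.
- exact: measurableC.
- exact: measurable_many_hits.
apply: le_trans (prob_many_hits_le X_meas X_law X_indep bad_meas k) _.
rewrite lee_fin ler_wpM2l // lerXn2r // ?nnegrE ?fine_ge0 //; first lra.
by rewrite -lee_fin fineK ?fin_num_measure.
Qed.
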